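(* Let $G=(V,E)$ be a finite graph with boundary $B\subseteq V$, $|B|\ge2$, and let $\delta_B=\min_{x\in B}\deg(x)$ be the minimum degree (in $G$) of the boundary vertices. Then $$\sigma_2(G,B)\le\frac{|B|}{|B|-1}\,\delta_B.$$
   Context: $G=(V,E)$ is a finite undirected graph. A boundary is a subset $B\subseteq V$ with $|B|\ge2$. For $f:V\to\mathbb{R}$, $f\neq0$, the Rayleigh quotient is $R(f)=\frac{\sum_{\{x,y\}\in E}(f(x)-f(y))^2}{\sum_{x\in B}f(x)^2}$, interpreted as $+\infty$ if $f$ vanishes on $B$. For $1\le k\le|B|$, the $k$-th Steklov eigenvalue is $\sigma_k(G,B)=\min_{W\subseteq\mathbb{R}^V,\dim W=k}\max_{0\ne f\in W}R(f)$, so $0=\sigma_1\le\sigma_2\le\cdots$. *)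

From HB Require Import structures.
From mathcomp Require Import all_boot all_order all_algebra.
From mathcomp Require Import boolp classical_sets reals constructive_ereal ereal.
Set Implicit Arguments. Unset Strict Implicit. Unset Printing Implicit Defensive.
Import Order.TTheory GRing.Theory Num.Theory.
Local Open Scope ring_scope.
Local Open Scope classical_set_scope.

(* A finite simple graph G = (V,E) is given by a symmetric irreflexive
   adjacency relation e on a finite type V; the edge {x,y} is in E iff e x y. *)

(* Dirichlet energy: sum over (unordered) edges {x,y} of (f x - f y)^2.
   Each edge is counted twice in the ordered double sum, hence the / 2. *)
Definition energy (R : realType) (V : finType) (e : rel V) (f : V -> R) : R :=
  (\sum_(x : V) \sum_(y : V | e x y) (f x - f y) ^+ 2) / 2.

Definition bnorm (R : realType) (V : finType) (B : {set V}) (f : V -> R) : R :=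
  \sum_(x in B) f x ^+ 2.

Definition rayleigh (R : realType) (V : finType) (e : rel V) (B : {set V})
  (f : V -> R) : \bar R :=
  if bnorm B f == 0 then +oo%E else (energy e f / bnorm B f)%:E.

(* k-th Steklov eigenvalue: min over k-dimensional subspaces W of R^V of the
   max of the Rayleigh quotient over nonzero f in W (as inf / sup in \bar R). *)
Definition steklov (R : realType) (V : finType) (e : rel V) (B : {set V})
  (k : nat) : \bar R :=
  ereal_inf
    ((fun W : {vspace {ffun V -> R^o}} =>
        ereal_sup
          ((fun f : {ffun V -> R^o} => rayleigh e B (fun x => (f x : R)))
             @` [set f | (f \in W) && (f != 0)]))
     @` [set W | \dim W == k]).

Definition degree (V : finType) (e : rel V) (x : V) : nat := #|[set y | e x y]|.

(* delta_B = min_{x in B} deg x  (the neutral element #|V| exceeds every degree,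
   and B is nonempty in the theorem). *)
Definition deltaB (V : finType) (e : rel V) (B : {set V}) : nat :=
  \big[minn/#|V|]_(x in B) degree e x.

(* Test the min-max characterisation with the plane spanned by the constants
   and the indicator d of a boundary vertex x0 of minimal degree.  For
   f = a + b d the energy is b^2 deg x0 and the boundary norm is
   (a + b)^2 + (n - 1) a^2, where n = |B|; the bound then follows from
     n/(n-1) deg x0 ((a + b)^2 + (n - 1) a^2) - b^2 deg x0
       = deg x0/(n-1) (n a + b)^2 >= 0. *)
From HB Require Import structures.
From mathcomp Require Import all_boot all_order all_algebra.
From mathcomp Require Import boolp classical_sets reals constructive_ereal ereal.
From mathcomp Require Import ring lra.
Import Order.TTheory GRing.Theory Num.Theory.
Local Open Scope ring_scope.

HB.instance Definition _ := SemiGroup.isComLaw.Build nat minn minnA minnC.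

Lemma deltaB_attained {V : finType} (e : rel V) (B : {set V}) :
  (0 < #|B|)%N -> exists2 x0, x0 \in B & deltaB e B = degree e x0.
Proof.
case/card_gt0P => x1 x1B; have [x0 x0B degree_min] := arg_minnP (degree e) x1B.
exists x0 => //; apply/eqP; rewrite eqn_leq; apply/andP; split.
  by rewrite /deltaB (bigD1 x0) //= geq_minl.
rewrite /deltaB; elim/big_ind: _ => [|m n lem len|x xB]; last exact: degree_min.
- exact: max_card.
- by rewrite leq_min lem len.
Qed.

Section Spikes.

Context {R : realType} {V : finType}.

Definition spike (a b : R) (x0 x : V) : R := a + b * (x == x0)%:R.

Lemma energy_spike (e : rel V) (a b : R) (x0 : V) :
  symmetric e -> irreflexive e ->
  energy e (spike a b x0) = b ^+ 2 * (degree e x0)%:R.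
Proof.
move=> e_sym e_irr; rewrite /energy /spike.
have edge_term x y : e x y ->
    (a + b * (x == x0)%:R - (a + b * (y == x0)%:R)) ^+ 2 =
    b ^+ 2 * (x == x0)%:R + b ^+ 2 * (y == x0)%:R.
  move=> exy; have : ~~ ((x == x0) && (y == x0)).
    by apply: contraTN exy => /andP[/eqP -> /eqP ->]; rewrite e_irr.
  by case: (x == x0); case: (y == x0) => //= _; ring.
under eq_bigr => x _ do rewrite (eq_bigr _ (edge_term x)) big_split /=.
rewrite big_split /=.
have -> : \sum_x \sum_(y | e x y) b ^+ 2 * (y == x0)%:R =
          \sum_x \sum_(y | e x y) b ^+ 2 * (x == x0)%:R.
  rewrite (exchange_big_dep xpredT) //=.
  by apply: eq_bigr => y _; apply: eq_bigl => x; rewrite e_sym.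
have -> : \sum_x \sum_(y | e x y) b ^+ 2 * (x == x0)%:R =
          b ^+ 2 * (degree e x0)%:R.
  rewrite (bigD1 x0) //= [X in _ + X]big1 ?addr0; last first.
    by move=> x /negPf x_neq; apply: big1 => y _; rewrite x_neq mulr0.
  rewrite eqxx mulr1 sumr_const -[LHS]mulr_natr /degree.
  by congr (_ * _%:R); apply: eq_card => y; apply/idP/idP; rewrite in_setE.
set E := _ * _%:R; lra.
Qed.

Lemma bnorm_spike (B : {set V}) (a b : R) (x0 : V) : x0 \in B ->
  bnorm B (spike a b x0) = (a + b) ^+ 2 + (#|B|%:R - 1) * a ^+ 2.
Proof.
move=> x0B; rewrite /bnorm /spike (bigD1 x0) //= eqxx mulr1; congr (_ + _).
rewrite (eq_bigr (fun _ => a ^+ 2)); last first.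
  by move=> x /andP[_ /negPf ->]; rewrite mulr0 addr0.
rewrite sumr_const -[LHS]mulr_natr [LHS]mulrC [in RHS](cardD1 x0) x0B.
rewrite add1n mulrSr addrK.
by congr (_%:R * _); apply: eq_card => x; rewrite !inE andbC.
Qed.

Lemma rayleigh_spike_le (e : rel V) (B : {set V}) (a b : R) (x0 : V) :
  symmetric e -> irreflexive e -> (2 <= #|B|)%N -> x0 \in B ->
  (a != 0) || (b != 0) ->
  (rayleigh e B (spike a b x0) <=
    ((#|B|%:R / (#|B|%:R - 1)) * (degree e x0)%:R : R)%:E)%E.
Proof.
move=> e_sym e_irr B_ge2 x0B ab_neq0.
have n_ge2 : (2 : R) <= #|B|%:R by rewrite (ler_nat R 2).
set n := (#|B|%:R : R) in n_ge2 *; set d := ((degree e x0)%:R : R).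
have d_ge0 : 0 <= d by rewrite /d ler0n.
rewrite /rayleigh bnorm_spike // energy_spike //.
set D := (a + b) ^+ 2 + (n - 1) * a ^+ 2.
have D_gt0 : 0 < D.
  have := sqr_ge0 (a + b); rewrite /D.
  case: (eqVneq a 0) ab_neq0 => [-> /= b_neq0 _|a_neq0 _ ab2_ge0].
    by rewrite add0r expr0n mulr0 addr0 lt0r sqr_ge0 sqrf_eq0 b_neq0.
  have : 0 < a ^+ 2 by rewrite lt0r sqr_ge0 sqrf_eq0 a_neq0.
  nra.
rewrite (gt_eqF D_gt0) lee_fin ler_pdivrMr //.
have n1_neq0 : n - 1 != 0 by apply/eqP => n1_eq0; lra.
have -> : b ^+ 2 * d = n / (n - 1) * d * D - d / (n - 1) * (n * a + b) ^+ 2.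
  by rewrite /D; field.
by rewrite gerBl mulr_ge0 ?sqr_ge0 // divr_ge0 //; lra.
Qed.

End Spikes.

Section SpikePlane.

Context {R : realType} {V : finType} (x0 : V).

Definition delta_ffun : {ffun V -> R^o} := [ffun x => (x == x0)%:R].

Definition spike_plane : {vspace {ffun V -> R^o}} :=
  <<[:: [ffun=> 1]; delta_ffun]>>%VS.

Lemma dim_spike_plane {x1 : V} : x1 != x0 -> \dim spike_plane = 2%N.
Proof.
move=> x10; suff : free [:: [ffun=> 1]; delta_ffun] by move/eqP.
rewrite free_cons seq1_free span_seq1; apply/andP; split.
  apply/vlineP => -[k /(congr1 (fun f : {ffun V -> R^o} => f x1))].
  by rewrite /= !ffunE (negPf x10) scaler0 => /eqP; rewrite oner_eq0.
apply/eqP => /(congr1 (fun f : {ffun V -> R^o} => f x0)).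
by rewrite /= !ffunE eqxx => /eqP; rewrite oner_eq0.
Qed.

Lemma spike_planeP (f : {ffun V -> R^o}) : f \in spike_plane ->
  exists a b, f =1 spike a b x0.
Proof.
rewrite /spike_plane span_cons span_seq1.
case/memv_addP => _ /vlineP[a ->] [_ /vlineP[b ->] ->].
by exists a, b => x; rewrite !ffunE /spike -[a%:A]/(a * 1) mulr1.
Qed.

End SpikePlane.

Lemma steklov_le_sup {R : realType} {V : finType} (e : rel V) (B : {set V})
    (W : {vspace {ffun V -> R^o}}) :
  (steklov R e B (\dim W) <=
    ereal_sup ((fun f : {ffun V -> R^o} => rayleigh e B (fun x => (f x : R)))
                 @` [set f | (f \in W) && (f != 0%R)]))%E.
Proof. by rewrite /steklov; apply: ereal_inf_lbound; exists W => /=. Qed.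

Theorem mainTheorem3 (R : realType) (V : finType) (e : rel V)
  (e_sym : symmetric e) (e_irr : irreflexive e) (B : {set V})
  (hB : (2 <= #|B|)%N) :
  (steklov R e B 2 <= ((#|B|%:R / (#|B|%:R - 1)) * (deltaB e B)%:R : R)%:E)%E.
Proof.
have [x0 x0B ->] := deltaB_attained e B (ltnW hB).
have [x1 x10] : exists x1, x1 != x0.
  have : (0 < #|B :\ x0|)%N by rewrite (cardsD1 x0) x0B in hB.
  by case/card_gt0P => x1; rewrite !inE => /andP[x10 _]; exists x1.
rewrite -(dim_spike_plane (R := R) x0 x10).
apply: le_trans (steklov_le_sup _ _ _) _.
apply: ge_ereal_sup => _ [f /= /andP[/spike_planeP[a [b fE]] f_neq0] <-].
have -> : (fun x => (f x : R)) = spike a b x0 := funext fE.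
apply: rayleigh_spike_le => //.
apply: contraNT f_neq0 => /norP[/negbNE/eqP a0 /negbNE/eqP b0].
by apply/eqP/ffunP => x; rewrite fE a0 b0 ffunE /spike mul0r addr0.
Qed.
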